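(* Let $(\mathcal C,\otimes,I)$ be a symmetric closed monoidal category and $M$ a commutative monad on $\mathcal C$, and let $A$ be an object. Then the tuple $\langle A\Rightarrow MA,\ \Lambda(q),\ \mathsf{kcomp},\ \mathsf{kident}\rangle$, where $q=\mu_A\circ M\mathsf{app}\circ\tau: M(A\Rightarrow MA)\otimes A\to M((A\Rightarrow MA)\otimes A)\to MMA\to MA$, is a symmetric Eilenberg--Moore $M$-monoid.
   Context: Symmetry $\mathsf{sym}:X\otimes Y\to Y\otimes X$; structural isomorphisms written $\cong$. Closed: $(-)\otimes B\dashv B\Rightarrow(-)$, currying $\Lambda:\mathcal C(X\otimes B,C)\cong\mathcal C(X,B\Rightarrow C)$, counit $\mathsf{app}:(B\Rightarrow C)\otimes B\to C$. $M$ has strength $\tau_{X,Y}:MX\otimes Y\to M(X\otimes Y)$ and left strength $\tau'_{X,Y}=M\mathsf{sym}\circ\tau_{Y,X}\circ\mathsf{sym}: X\otimes MY\to M(X\otimes Y)$; commutativity means $\mu\circ M\tau\circ\tau'=\mu\circ M\tau'\circ\tau: MX\otimes MY\to M(X\otimes Y)$. Kleisli composition: $\mathsf{kcomp}=\Lambda(w):(B\Rightarrow MC)\otimes(X\Rightarrow MB)\to(X\Rightarrow MC)$ where $w=\mu_C\circ M\mathsf{app}\circ\tau'\circ(\mathrm{id}\otimes\mathsf{app})\circ\cong: ((B\Rightarrow MC)\otimes(X\Rightarrow MB))\otimes X\to (B\Rightarrow MC)\otimes((X\Rightarrow MB)\otimes X)\to(B\Rightarrow MC)\otimes MB\to M((B\Rightarrow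 MC)\otimes B)\to MMC\to MC$; $\mathsf{kident}=\Lambda(\eta_X\circ\cong): I\to(X\Rightarrow MX)$ with $\cong: I\otimes X\to X$ (here $X=B=C=A$). A symmetric Eilenberg--Moore $M$-monoid is a tuple $\langle E,a: ME\to E,m: E\otimes E\to E,u: I\to E\rangle$ with $\langle E,a\rangle$ an Eilenberg--Moore $M$-algebra, $\langle E,m,u\rangle$ a monoid, and $a\circ Mm\circ\mu_{E\otimes E}\circ M\tau'_{E,E}\circ\tau_{E,ME}=m\circ(a\otimes a): ME\otimes ME\to E$. *)

Set Implicit Arguments.
Unset Strict Implicit.
Set Universe Polymorphism.

Record SMCC := {
  Obj :> Type;
  Hom : Obj -> Obj -> Type;
  cid : forall X, Hom X X;
  ccomp : forall X Y Z, Hom Y Z -> Hom X Y -> Hom X Z;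
  comp_id_l : forall X Y (f : Hom X Y), ccomp (cid Y) f = f;
  comp_id_r : forall X Y (f : Hom X Y), ccomp f (cid X) = f;
  comp_assoc : forall X Y Z W (h : Hom Z W) (g : Hom Y Z) (f : Hom X Y),
      ccomp h (ccomp g f) = ccomp (ccomp h g) f;

  tens : Obj -> Obj -> Obj;
  tensH : forall X X' Y Y', Hom X X' -> Hom Y Y' -> Hom (tens X Y) (tens X' Y');
  tensH_id : forall X Y, tensH (cid X) (cid Y) = cid (tens X Y);
  tensH_comp : forall X X' X'' Y Y' Y'' (f' : Hom X' X'') (f : Hom X X')
      (g' : Hom Y' Y'') (g : Hom Y Y'),
      tensH (ccomp f' f) (ccomp g' g) = ccomp (tensH f' g') (tensH f g);
  unit : Obj;

  assoc : forall X Y Z, Hom (tens (tens X Y) Z) (tens X (tens Y Z));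
  assoc_inv : forall X Y Z, Hom (tens X (tens Y Z)) (tens (tens X Y) Z);
  assoc_iso1 : forall X Y Z, ccomp (assoc_inv X Y Z) (assoc X Y Z) = cid _;
  assoc_iso2 : forall X Y Z, ccomp (assoc X Y Z) (assoc_inv X Y Z) = cid _;
  assoc_nat : forall X X' Y Y' Z Z' (f : Hom X X') (g : Hom Y Y') (h : Hom Z Z'),
      ccomp (assoc X' Y' Z') (tensH (tensH f g) h)
      = ccomp (tensH f (tensH g h)) (assoc X Y Z);

  lunit : forall X, Hom (tens unit X) X;
  lunit_inv : forall X, Hom X (tens unit X);
  lunit_iso1 : forall X, ccomp (lunit_inv X) (lunit X) = cid _;
  lunit_iso2 : forall X, ccomp (lunit X) (lunit_inv X) = cid _;
  lunit_nat : forall X X' (f : Hom X X'),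
      ccomp (lunit X') (tensH (cid unit) f) = ccomp f (lunit X);

  runit : forall X, Hom (tens X unit) X;
  runit_inv : forall X, Hom X (tens X unit);
  runit_iso1 : forall X, ccomp (runit_inv X) (runit X) = cid _;
  runit_iso2 : forall X, ccomp (runit X) (runit_inv X) = cid _;
  runit_nat : forall X X' (f : Hom X X'),
      ccomp (runit X') (tensH f (cid unit)) = ccomp f (runit X);

  pentagon : forall W X Y Z,
      ccomp (assoc W X (tens Y Z)) (assoc (tens W X) Y Z)
      = ccomp (tensH (cid W) (assoc X Y Z))
          (ccomp (assoc W (tens X Y) Z) (tensH (assoc W X Y) (cid Z)));
  triangle : forall X Y,
      ccomp (tensH (cid X) (lunit Y)) (assoc X unit Y)
      = tensH (runit X) (cid Y);

  sym : forall X Y, Hom (tens X Y) (tens Y X);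
  sym_nat : forall X X' Y Y' (f : Hom X X') (g : Hom Y Y'),
      ccomp (sym X' Y') (tensH f g) = ccomp (tensH g f) (sym X Y);
  sym_invol : forall X Y, ccomp (sym Y X) (sym X Y) = cid (tens X Y);
  hexagon : forall X Y Z,
      ccomp (assoc Y Z X) (ccomp (sym X (tens Y Z)) (assoc X Y Z))
      = ccomp (tensH (cid Y) (sym X Z))
          (ccomp (assoc Y X Z) (tensH (sym X Y) (cid Z)));

  ihom : Obj -> Obj -> Obj;
  app : forall B C, Hom (tens (ihom B C) B) C;
  curry : forall X B C, Hom (tens X B) C -> Hom X (ihom B C);
  curry_beta : forall X B C (f : Hom (tens X B) C),
      ccomp (app B C) (tensH (curry f) (cid B)) = f;
  curry_eta : forall X B C (g : Hom X (ihom B C)),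
      curry (ccomp (app B C) (tensH g (cid B))) = g
}.

Arguments cid {_} X.
Arguments ccomp {_ X Y Z} g f.
Arguments tens {_} X Y.
Arguments tensH {_ X X' Y Y'} f g.
Arguments unit {_}.
Arguments assoc {_} X Y Z.
Arguments lunit {_} X.
Arguments runit {_} X.
Arguments sym {_} X Y.
Arguments ihom {_} B C.
Arguments app {_} B C.
Arguments curry {_ X B C} f.

Notation "g \o f" := (ccomp g f) (at level 40, left associativity).
Notation "X (x) Y" := (tens X Y) (at level 35, right associativity).
Notation "B ==> C" := (ihom B C) (at level 55, right associativity).

Record CommMonad (C : SMCC) := {
  M : C -> C;
  Mmap : forall X Y : C, Hom X Y -> Hom (M X) (M Y);
  Mmap_id : forall X : C, Mmap (cid X) = cid (M X);
  Mmap_comp : forall (X Y Z : C) (g : Hom Y Z) (f : Hom X Y),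
      Mmap (g \o f) = Mmap g \o Mmap f;
  eta : forall X : C, Hom X (M X);
  mu : forall X : C, Hom (M (M X)) (M X);
  eta_nat : forall (X Y : C) (f : Hom X Y), Mmap f \o eta X = eta Y \o f;
  mu_nat : forall (X Y : C) (f : Hom X Y),
      Mmap f \o mu X = mu Y \o Mmap (Mmap f);
  mu_eta_l : forall X : C, mu X \o eta (M X) = cid (M X);
  mu_eta_r : forall X : C, mu X \o Mmap (eta X) = cid (M X);
  mu_assoc : forall X : C, mu X \o Mmap (mu X) = mu X \o mu (M X);

  tau : forall X Y : C, Hom (M X (x) Y) (M (X (x) Y));
  tau_nat : forall (X X' Y Y' : C) (f : Hom X X') (g : Hom Y Y'),
      tau X' Y' \o tensH (Mmap f) g = Mmap (tensH f g) \o tau X Y;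
  tau_runit : forall X : C, Mmap (runit X) \o tau X unit = runit (M X);
  tau_assoc : forall X Y Z : C,
      tau X (Y (x) Z) \o assoc (M X) Y Z
      = Mmap (assoc X Y Z) \o (tau (X (x) Y) Z \o tensH (tau X Y) (cid Z));
  tau_eta : forall X Y : C, tau X Y \o tensH (eta X) (cid Y) = eta (X (x) Y);
  tau_mu : forall X Y : C,
      tau X Y \o tensH (mu X) (cid Y) = mu (X (x) Y) \o (Mmap (tau X Y) \o tau (M X) Y);

  (* commutativity: mu ∘ Mτ ∘ τ' = mu ∘ Mτ' ∘ τ : MX ⊗ MY -> M(X ⊗ Y),
     where τ'_{X,Y} = M sym ∘ τ_{Y,X} ∘ sym *)
  commutative : forall X Y : C,
      mu (X (x) Y) \o (Mmap (tau X Y)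
        \o (Mmap (sym Y (M X)) \o (tau Y (M X) \o sym (M X) (M Y))))
      = mu (X (x) Y) \o (Mmap (Mmap (sym Y X) \o (tau Y X \o sym X (M Y)))
        \o tau X (M Y))
}.

Arguments M {_} c X.
Arguments Mmap {_} c {X Y} f.
Arguments eta {_} c X.
Arguments mu {_} c X.
Arguments tau {_} c X Y.

Section Derived.
Context {C : SMCC} (T : CommMonad C).

Definition ltau (X Y : C) : Hom (X (x) M T Y) (M T (X (x) Y)) :=
  Mmap T (sym Y X) \o (tau T Y X \o sym X (M T Y)).

Definition kcomp (X B D : C) :
  Hom ((B ==> M T D) (x) (X ==> M T B)) (X ==> M T D) :=
  curry (mu T D \o (Mmap T (app B (M T D))
          \o (ltau (B ==> M T D) B
          \o (tensH (cid (B ==> M T D)) (app X (M T B))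
          \o assoc (B ==> M T D) (X ==> M T B) X)))).

Definition kident (X : C) : Hom unit (X ==> M T X) :=
  curry (eta T X \o lunit X).

Definition qmap (A : C) : Hom (M T (A ==> M T A) (x) A) (M T A) :=
  mu T A \o (Mmap T (app A (M T A)) \o tau T (A ==> M T A) A).

Definition is_EM_algebra (E : C) (a : Hom (M T E) E) : Prop :=
  a \o eta T E = cid E /\ a \o Mmap T a = a \o mu T E.

Definition is_monoid (E : C) (m : Hom (E (x) E) E) (u : Hom unit E) : Prop :=
  m \o tensH m (cid E) = m \o (tensH (cid E) m \o assoc E E E) /\
  m \o tensH u (cid E) = lunit E /\
  m \o tensH (cid E) u = runit E.

Definition is_sym_EM_monoid (E : C) (a : Hom (M T E) E)
    (m : Hom (E (x) E) E) (u : Hom unit E) : Prop :=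
  is_EM_algebra a /\ is_monoid m u /\
  a \o (Mmap T m \o (mu T (E (x) E) \o (Mmap T (ltau E E) \o tau T E (M T E))))
  = m \o tensH a a.

End Derived.

Arguments is_EM_algebra {C} T {E} a.
Arguments is_monoid {C} {E} m u.
Arguments is_sym_EM_monoid {C} T {E} a m u.
Arguments ltau {C} T X Y.
Arguments kcomp {C} T X B D.
Arguments kident {C} T X.
Arguments qmap {C} T A.


(* Uncurrying turns each law into an equation between morphisms out of
   [_ ⊗ X], proved by rewriting with the monad laws, the strength axioms and
   the symmetric monoidal coherence.  The monoid laws are the associativity
   and unit laws of Kleisli composition, which hold for any strong monad.
   The compatibility of [Λ q] with Kleisli composition is where commutativity
   enters: written with the double strength [dstr = μ ∘ Mτ ∘ τ'], both sides,
   uncurried, become [μ ∘ M app ∘ dstr ∘ (id ⊗ kapp) ∘ α], i.e. "evaluate the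
   inner computation at the argument, then apply the outer one"; one side
   reaches this form only after exchanging the order of the two effects. *)

Set Implicit Arguments.
Unset Strict Implicit.

Section Category.
Variable C : SMCC.

Lemma comp_prefix2 (X Y Z W : C) (a : Hom Y Z) (b : Hom X Y) (c : Hom X Z)
    (y : Hom W X) :
  a \o b = c -> a \o (b \o y) = c \o y.
Proof. intros H. rewrite comp_assoc, H. reflexivity. Qed.

Lemma comp_prefix3 (X Y Z U W : C) (a : Hom Z U) (b : Hom Y Z) (b' : Hom X Y)
    (c : Hom X U) (y : Hom W X) :
  a \o (b \o b') = c -> a \o (b \o (b' \o y)) = c \o y.
Proof. intros H. rewrite !comp_assoc, <- H, !comp_assoc. reflexivity. Qed.

Lemma tensH_comp_l (X X' X'' Y : C) (f' : Hom X' X'') (f : Hom X X') :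
  tensH (f' \o f) (cid Y) = tensH f' (cid Y) \o tensH f (cid Y).
Proof. rewrite <- tensH_comp, comp_id_l. reflexivity. Qed.

Lemma tensH_comp_r (X Y Y' Y'' : C) (g' : Hom Y' Y'') (g : Hom Y Y') :
  tensH (cid X) (g' \o g) = tensH (cid X) g' \o tensH (cid X) g.
Proof. rewrite <- tensH_comp, comp_id_l. reflexivity. Qed.

Lemma tensH_split_lr (X X' Y Y' : C) (f : Hom X X') (g : Hom Y Y') :
  tensH f g = tensH f (cid Y') \o tensH (cid X) g.
Proof. rewrite <- tensH_comp, comp_id_l, comp_id_r. reflexivity. Qed.

Lemma tensH_split_rl (X X' Y Y' : C) (f : Hom X X') (g : Hom Y Y') :
  tensH f g = tensH (cid X') g \o tensH f (cid Y).
Proof. rewrite <- tensH_comp, comp_id_l, comp_id_r. reflexivity. Qed.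

Lemma tensH_interchange (X X' Y Y' : C) (f : Hom X X') (g : Hom Y Y') :
  tensH (cid X') g \o tensH f (cid Y) = tensH f (cid Y') \o tensH (cid X) g.
Proof. rewrite <- tensH_split_lr, <- tensH_split_rl. reflexivity. Qed.

Lemma iso_cancel_r (X Y Z : C) (r : Hom X Y) (s : Hom Y X) (f g : Hom Y Z) :
  r \o s = cid Y -> f \o r = g \o r -> f = g.
Proof.
  intros Hrs H.
  rewrite <- (comp_id_r f), <- (comp_id_r g), <- Hrs, !comp_assoc, H.
  reflexivity.
Qed.

Lemma iso_cancel_l (X Y Z : C) (r : Hom Y Z) (s : Hom Z Y) (f g : Hom X Y) :
  s \o r = cid Y -> r \o f = r \o g -> f = g.
Proof.
  intros Hsr H.
  rewrite <- (comp_id_l f), <- (comp_id_l g), <- Hsr, <- !comp_assoc, H.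
  reflexivity.
Qed.

Lemma curry_inj (W X Y : C) (f g : Hom W (X ==> Y)) :
  app X Y \o tensH f (cid X) = app X Y \o tensH g (cid X) -> f = g.
Proof. intros H. rewrite <- (curry_eta f), <- (curry_eta g), H. reflexivity. Qed.

End Category.

Arguments tensH_comp_l {C X X' X'' Y} f' f.
Arguments tensH_comp_r {C X Y Y' Y''} g' g.

Ltac reassoc := repeat rewrite <- comp_assoc.
Ltac simpl_id := repeat rewrite ?tensH_id, ?comp_id_l, ?comp_id_r.

(* [rw E] also rewrites when the left-hand side of [E] is a prefix of a
   right-associated composite. *)
Tactic Notation "rw" open_constr(E) :=
  first [ rewrite E
        | rewrite (comp_prefix2 _ E) | rewrite (comp_prefix3 _ E) ];
  reassoc.
Tactic Notation "rwb" open_constr(E) := rw (eq_sym E).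

Section Coherence.
Variable C : SMCC.

Lemma tensH_unit_inj (X Y : C) (f g : Hom X Y) :
  tensH (cid unit) f = tensH (cid unit) g -> f = g.
Proof.
  intros H.
  rewrite <- (comp_id_r f), <- (comp_id_r g), <- (lunit_iso2 X), !comp_assoc,
    <- !lunit_nat, H.
  reflexivity.
Qed.

Lemma tensH_unit_inj_r (X Y : C) (f g : Hom X Y) :
  tensH f (cid unit) = tensH g (cid unit) -> f = g.
Proof.
  intros H.
  rewrite <- (comp_id_r f), <- (comp_id_r g), <- (runit_iso2 X), !comp_assoc,
    <- !runit_nat, H.
  reflexivity.
Qed.

(* Kelly's argument: tensor with [I] on the left and compare the pentagon
   for [I, I, X, Y] with the triangle identities. *)
Lemma lunit_assoc (X Y : C) :
  lunit (X (x) Y) \o assoc unit X Y = tensH (lunit X) (cid Y).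
Proof.
  apply tensH_unit_inj.
  apply (iso_cancel_r
           (r := assoc unit (unit (x) X) Y \o tensH (assoc unit unit X) (cid Y))
           (s := tensH (assoc_inv unit unit X) (cid Y)
                   \o assoc_inv unit (unit (x) X) Y)).
  - reassoc. rwb (tensH_comp_l _ _).
    rewrite assoc_iso2, tensH_id, comp_id_l, assoc_iso2. reflexivity.
  - rewrite tensH_comp_r. reassoc.
    rwb (pentagon _ _ _ _). rw (triangle _ _).
    rwb (assoc_nat (cid unit) (lunit X) (cid Y)).
    rwb (tensH_comp_l _ _). rewrite triangle, <- (tensH_id X Y).
    rw (assoc_nat (runit unit) (cid X) (cid Y)).
    reflexivity.
Qed.

Lemma lunit_sym (X : C) : lunit X \o sym X unit = runit X.
Proof.
  apply tensH_unit_inj_r.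
  apply (iso_cancel_l (r := sym X unit) (s := sym unit X)); [apply sym_invol |].
  rewrite tensH_comp_l. rwb (lunit_assoc _ _). rwb (lunit_nat _).
  rwb (hexagon _ _ _). rw (lunit_assoc _ _). rwb (sym_nat _ _).
  rw (triangle _ _). reflexivity.
Qed.

Lemma runit_sym (X : C) : runit X \o sym unit X = lunit X.
Proof. rewrite <- lunit_sym. reassoc. rewrite sym_invol. simpl_id. reflexivity. Qed.

(* The second hexagon, obtained from the first by symmetry. *)
Lemma hexagon_r (W Y X : C) :
  sym (Y (x) X) W =
  assoc W Y X \o (tensH (sym Y W) (cid X) \o (assoc_inv Y W X
    \o (tensH (cid Y) (sym X W) \o assoc Y X W))).
Proof.
  apply (iso_cancel_r (r := sym W (Y (x) X) \o assoc W Y X)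
                      (s := assoc_inv W Y X \o sym (Y (x) X) W)).
  - reassoc. rw (assoc_iso2 _ _ _). simpl_id. apply sym_invol.
  - reassoc. rw (sym_invol _ _). simpl_id. rw (hexagon _ _ _).
    rwb (tensH_comp_r _ _). rewrite sym_invol. simpl_id.
    rw (assoc_iso1 _ _ _). simpl_id.
    rwb (tensH_comp_l _ _). rewrite sym_invol. simpl_id. reflexivity.
Qed.

Lemma hexagon_r_assoc (X Y Z : C) :
  assoc X Y Z \o (tensH (sym Y X) (cid Z) \o (assoc_inv Y X Z
    \o tensH (cid Y) (sym Z X)))
  = sym (Y (x) Z) X \o assoc_inv Y Z X.
Proof.
  rewrite (hexagon_r X Y Z). reassoc. rw (assoc_iso2 _ _ _). simpl_id.
  reflexivity.
Qed.

Lemma hexagon_assoc (W X Z : C) :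
  assoc W X Z \o tensH (sym X W) (cid Z) =
  tensH (cid W) (sym Z X) \o (assoc W Z X \o (sym X (W (x) Z) \o assoc X W Z)).
Proof.
  rw (hexagon X W Z). rwb (tensH_comp_r _ _). rewrite sym_invol. simpl_id.
  reflexivity.
Qed.

Lemma sym_tens_braid (X Y W : C) :
  tensH (cid W) (sym X Y) \o sym (X (x) Y) W =
  assoc W Y X \o (tensH (sym Y W) (cid X) \o (sym X (Y (x) W) \o assoc X Y W)).
Proof.
  rwb (sym_nat (sym X Y) (cid W)). rewrite (hexagon_r W Y X). reassoc.
  rwb (hexagon X Y W). rw (assoc_iso1 _ _ _). simpl_id. reflexivity.
Qed.

Lemma assoc_sym_tens (X Y Z : C) :
  assoc X Y Z \o sym Z (X (x) Y) =
  sym (Y (x) Z) X \o (tensH (sym Z Y) (cid X)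
    \o (assoc_inv Z Y X \o tensH (cid Z) (sym X Y))).
Proof.
  rw (sym_nat (sym Z Y) (cid X)). rw (sym_tens_braid Z Y X).
  rwb (sym_nat (cid Z) (sym Y X)). rw (assoc_iso2 _ _ _). simpl_id.
  rwb (tensH_comp_r _ _). rewrite sym_invol. simpl_id. reflexivity.
Qed.

End Coherence.

Section Strength.
Variables (C : SMCC) (T : CommMonad C).

Lemma Mmap_sym_invol (X Y : C) :
  Mmap T (sym Y X) \o Mmap T (sym X Y) = cid (M T (X (x) Y)).
Proof. rewrite <- Mmap_comp, sym_invol, Mmap_id. reflexivity. Qed.

Lemma Mmap_compE (X Y Z : C) (g : Hom Y Z) (f : Hom X Y) :
  Mmap T g \o Mmap T f = Mmap T (g \o f).
Proof. symmetry. apply Mmap_comp. Qed.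

Lemma Mmap_comp2 (X Y Z : C) (a : Hom Y Z) (b : Hom X Y) (c : Hom X Z) :
  a \o b = c -> Mmap T a \o Mmap T b = Mmap T c.
Proof. intros H. rewrite <- Mmap_comp, H. reflexivity. Qed.

Lemma Mmap_comp3 (X Y Z U : C) (a : Hom Z U) (b : Hom Y Z) (b' : Hom X Y)
    (c : Hom X U) :
  a \o (b \o b') = c -> Mmap T a \o (Mmap T b \o Mmap T b') = Mmap T c.
Proof. intros H. rewrite <- !Mmap_comp, H. reflexivity. Qed.

Lemma tau_nat_r (X Y Y' : C) (g : Hom Y Y') :
  tau T X Y' \o tensH (cid (M T X)) g = Mmap T (tensH (cid X) g) \o tau T X Y.
Proof. rewrite <- (Mmap_id T X). apply tau_nat. Qed.

Lemma tau_nat_l (X X' Y : C) (f : Hom X X') :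
  tau T X' Y \o tensH (Mmap T f) (cid Y) = Mmap T (tensH f (cid Y)) \o tau T X Y.
Proof. apply tau_nat. Qed.

Lemma tau_assoc_inv (X Y Z : C) :
  tau T (X (x) Y) Z \o tensH (tau T X Y) (cid Z) =
  Mmap T (assoc_inv X Y Z) \o (tau T X (Y (x) Z) \o assoc (M T X) Y Z).
Proof.
  rewrite tau_assoc. reassoc. rw (Mmap_compE _ _).
  rewrite assoc_iso1, Mmap_id. simpl_id. reflexivity.
Qed.

Lemma ltau_nat (X X' Y Y' : C) (f : Hom X X') (g : Hom Y Y') :
  ltau T X' Y' \o tensH f (Mmap T g) = Mmap T (tensH f g) \o ltau T X Y.
Proof.
  unfold ltau. reassoc. rw (sym_nat f (Mmap T g)). rw (tau_nat T g f).
  rw (Mmap_compE _ _). rewrite sym_nat, Mmap_comp. reassoc. reflexivity.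
Qed.

Lemma ltau_nat_l (X X' Y : C) (f : Hom X X') :
  ltau T X' Y \o tensH f (cid (M T Y)) = Mmap T (tensH f (cid Y)) \o ltau T X Y.
Proof. rewrite <- (Mmap_id T Y). apply ltau_nat. Qed.

Lemma ltau_nat_r (X Y Y' : C) (g : Hom Y Y') :
  ltau T X Y' \o tensH (cid X) (Mmap T g) = Mmap T (tensH (cid X) g) \o ltau T X Y.
Proof. apply ltau_nat. Qed.

Lemma ltau_mu (X Y : C) :
  ltau T X Y \o tensH (cid X) (mu T Y) =
  mu T (X (x) Y) \o (Mmap T (ltau T X Y) \o ltau T X (M T Y)).
Proof.
  unfold ltau. reassoc. rw (sym_nat (cid X) (mu T Y)). rw (tau_mu T Y X).
  rw (mu_nat T (sym Y X)). rewrite !Mmap_comp. reassoc.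
  rw (Mmap_sym_invol _ _). simpl_id. reflexivity.
Qed.

Lemma ltau_eta (X Y : C) :
  ltau T X Y \o tensH (cid X) (eta T Y) = eta T (X (x) Y).
Proof.
  unfold ltau. reassoc. rw (sym_nat (cid X) (eta T Y)). rw (tau_eta T Y X).
  rw (eta_nat T (sym Y X)). rewrite sym_invol. simpl_id. reflexivity.
Qed.

Lemma ltau_lunit (Y : C) : Mmap T (lunit Y) \o ltau T unit Y = lunit (M T Y).
Proof.
  unfold ltau. rw (Mmap_compE _ _). rewrite lunit_sym. rw (tau_runit T Y).
  apply runit_sym.
Qed.

Lemma ltau_assoc (X Y Z : C) :
  Mmap T (assoc X Y Z) \o ltau T (X (x) Y) Z =
  ltau T X (Y (x) Z) \o (tensH (cid X) (ltau T Y Z) \o assoc X Y (M T Z)).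
Proof.
  unfold ltau. rewrite !tensH_comp_r. reassoc.
  rw (sym_nat (cid X) (Mmap T (sym Z Y))). rw (sym_nat (cid X) (tau T Z Y)).
  rw (sym_nat (cid X) (sym Y (M T Z))).
  rw (tau_nat_l _ (sym Z Y)). rw (tau_assoc_inv Z Y X).
  rwb (sym_tens_braid X Y (M T Z)). rw (tau_nat_r _ (sym X Y)).
  rw (Mmap_compE _ _). rewrite assoc_sym_tens, !Mmap_comp. reassoc.
  reflexivity.
Qed.

Lemma ltau_tau_assoc (X Y Z : C) :
  Mmap T (assoc X Y Z) \o (tau T (X (x) Y) Z \o tensH (ltau T X Y) (cid Z)) =
  ltau T X (Y (x) Z) \o (tensH (cid X) (tau T Y Z) \o assoc X (M T Y) Z).
Proof.
  unfold ltau. rewrite !tensH_comp_l. reassoc.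
  rw (tau_nat_l _ (sym Y X)). rw (tau_assoc_inv Y X Z).
  rw (hexagon_assoc (M T Y) X Z). rw (tau_nat_r _ (sym Z X)).
  rw (sym_nat (cid X) (tau T Y Z)). rw (tau_assoc_inv Y Z X).
  rw (Mmap_compE (sym (Y (x) Z) X) _). rewrite <- (hexagon_r_assoc X Y Z).
  rewrite !Mmap_comp. reassoc. reflexivity.
Qed.

End Strength.

Tactic Notation "rwM" open_constr(E) :=
  first [ rw (Mmap_comp2 _ E) | rw (Mmap_comp3 _ E) ];
  rewrite ?Mmap_comp, ?Mmap_id; simpl_id; reassoc.

Section DoubleStrength.
Variables (C : SMCC) (T : CommMonad C).

Definition dstr (X Y : C) : Hom (M T X (x) M T Y) (M T (X (x) Y)) :=
  mu T (X (x) Y) \o (Mmap T (tau T X Y) \o ltau T (M T X) Y).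

Lemma dstr_tau_ltau (X Y : C) :
  mu T (X (x) Y) \o (Mmap T (ltau T X Y) \o tau T X (M T Y)) = dstr X Y.
Proof. symmetry. exact (commutative T X Y). Qed.

Lemma dstr_nat_r (X Y Y' : C) (g : Hom Y Y') :
  dstr X Y' \o tensH (cid (M T X)) (Mmap T g) = Mmap T (tensH (cid X) g) \o dstr X Y.
Proof.
  unfold dstr. reassoc. rw (ltau_nat_r T _ _). rwM (tau_nat_r T _ _).
  rwb (mu_nat T _). reflexivity.
Qed.

Lemma dstr_mu_r (X Y : C) :
  mu T (X (x) Y) \o (Mmap T (ltau T X Y) \o dstr X (M T Y))
  = dstr X Y \o tensH (cid (M T X)) (mu T Y).
Proof.
  unfold dstr. reassoc. rw (ltau_mu T _ _).
  rw (mu_nat T _). rwb (mu_assoc T _). rwM (dstr_tau_ltau _ _).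
  unfold dstr. rewrite !Mmap_comp. reassoc.
  rw (mu_nat T _). rwb (mu_assoc T _). reflexivity.
Qed.

Lemma dstr_tau_assoc (X Y Z : C) :
  tau T (X (x) Y) Z \o tensH (dstr X Y) (cid Z) =
  Mmap T (assoc_inv X Y Z) \o (dstr X (Y (x) Z)
    \o (tensH (cid (M T X)) (tau T Y Z) \o assoc (M T X) (M T Y) Z)).
Proof.
  unfold dstr. rewrite !tensH_comp_l. reassoc.
  rw (tau_mu T _ _). rw (tau_nat_l T _ _). rwM (tau_assoc_inv T _ _ _).
  rw (ltau_tau_assoc T _ _ _). rw (mu_nat T _). reflexivity.
Qed.

End DoubleStrength.

Section KleisliMonoid.
Variables (C : SMCC) (T : CommMonad C).

(* The paper's [q], for arbitrary [X ⇒ MY]; [qmap T A] is [kapp A A]. *)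
Definition kapp (X Y : C) : Hom (M T (X ==> M T Y) (x) X) (M T Y) :=
  mu T Y \o (Mmap T (app X (M T Y)) \o tau T (X ==> M T Y) X).

Definition kcomp_uncurried (X Y Z : C) :
  Hom (((Y ==> M T Z) (x) (X ==> M T Y)) (x) X) (M T Z) :=
  mu T Z \o (Mmap T (app Y (M T Z)) \o (ltau T (Y ==> M T Z) Y
    \o (tensH (cid (Y ==> M T Z)) (app X (M T Y))
    \o assoc (Y ==> M T Z) (X ==> M T Y) X))).

Lemma kapp_beta (X Y : C) :
  app X (M T Y) \o tensH (curry (kapp X Y)) (cid X) = kapp X Y.
Proof. apply curry_beta. Qed.

Lemma kcomp_beta (X Y Z : C) :
  app X (M T Z) \o tensH (kcomp T X Y Z) (cid X) = kcomp_uncurried X Y Z.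
Proof. apply curry_beta. Qed.

Lemma kident_beta (X : C) :
  app X (M T X) \o tensH (kident T X) (cid X) = eta T X \o lunit X.
Proof. apply curry_beta. Qed.

Lemma kapp_eta (X Y : C) :
  curry (kapp X Y) \o eta T (X ==> M T Y) = cid (X ==> M T Y).
Proof.
  apply curry_inj. rewrite tensH_comp_l. rw (kapp_beta X Y). unfold kapp.
  reassoc. rw (tau_eta T _ _). rw (eta_nat T _). rw (mu_eta_l T _). simpl_id.
  reflexivity.
Qed.

Lemma kapp_mu (X Y : C) :
  curry (kapp X Y) \o Mmap T (curry (kapp X Y))
  = curry (kapp X Y) \o mu T (X ==> M T Y).
Proof.
  apply curry_inj. rewrite !tensH_comp_l. rw (kapp_beta X Y). rw (kapp_beta X Y).
  unfold kapp. reassoc.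
  rw (tau_nat_l T _ _). rw (Mmap_compE T _ _). rewrite kapp_beta. unfold kapp.
  rewrite !Mmap_comp. reassoc.
  rw (tau_mu T _ _). rw (mu_nat T _). rw (mu_assoc T _). reflexivity.
Qed.

Lemma kcomp_assoc (X Y Z W : C) :
  kcomp T X Y W \o tensH (kcomp T Y Z W) (cid (X ==> M T Y)) =
  kcomp T X Z W \o (tensH (cid (Z ==> M T W)) (kcomp T X Y Z)
    \o assoc (Z ==> M T W) (Y ==> M T Z) (X ==> M T Y)).
Proof.
  apply curry_inj. rewrite !tensH_comp_l. rw (kcomp_beta X Y W).
  rw (kcomp_beta X Z W). unfold kcomp_uncurried. reassoc.
  rw (assoc_nat _ _ _). simpl_id. rw (tensH_interchange _ _). rw (ltau_nat_l T _ _).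
  rw (Mmap_compE T _ _). rewrite kcomp_beta. unfold kcomp_uncurried.
  rewrite !Mmap_comp. reassoc.
  rw (ltau_assoc T _ _ _). rw (assoc_nat _ _ _). simpl_id. rwb (tensH_comp_r _ _).
  rewrite kcomp_beta. unfold kcomp_uncurried. rewrite !tensH_comp_r. reassoc.
  rw (ltau_mu T _ _). rw (ltau_nat_r T _ _). rwb (pentagon _ _ _ _).
  rwb (assoc_nat (cid _) (cid _) _). simpl_id.
  rw (mu_nat T _). rw (mu_assoc T _). reflexivity.
Qed.

Lemma kident_kcomp (X Y : C) :
  kcomp T X Y Y \o tensH (kident T Y) (cid (X ==> M T Y)) = lunit (X ==> M T Y).
Proof.
  apply curry_inj. rewrite tensH_comp_l. rw (kcomp_beta X Y Y).
  unfold kcomp_uncurried. reassoc.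
  rw (assoc_nat _ _ _). simpl_id. rw (tensH_interchange _ _). rw (ltau_nat_l T _ _).
  rw (Mmap_compE T _ _). rewrite kident_beta, Mmap_comp. reassoc.
  rw (mu_eta_r T _). simpl_id.
  rw (ltau_lunit T _). rw (lunit_nat _). rw (lunit_assoc _ _). reflexivity.
Qed.

Lemma kcomp_kident (X Y : C) :
  kcomp T X X Y \o tensH (cid (X ==> M T Y)) (kident T X) = runit (X ==> M T Y).
Proof.
  apply curry_inj. rewrite tensH_comp_l. rw (kcomp_beta X X Y).
  unfold kcomp_uncurried. reassoc.
  rw (assoc_nat _ _ _). simpl_id. rwb (tensH_comp_r _ _). rewrite kident_beta.
  rewrite tensH_comp_r. reassoc.
  rw (ltau_eta T _ _). rw (eta_nat T (app X (M T Y))). rw (mu_eta_l T _). simpl_id.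
  rw (triangle _ _). reflexivity.
Qed.


Lemma kcomp_uncurried_curry_kapp (X Y Z : C) :
  kcomp_uncurried X Y Z
    \o tensH (tensH (curry (kapp Y Z)) (curry (kapp X Y))) (cid X)
  = mu T Z \o (Mmap T (app Y (M T Z)) \o (dstr T (Y ==> M T Z) Y
    \o (tensH (cid (M T (Y ==> M T Z))) (kapp X Y)
    \o assoc (M T (Y ==> M T Z)) (M T (X ==> M T Y)) X))).
Proof.
  unfold kcomp_uncurried. reassoc.
  rw (assoc_nat _ _ _). rewrite (tensH_split_lr _ (tensH _ (cid X))). reassoc.
  rw (tensH_interchange _ _). rwb (tensH_comp_r _ _). rewrite kapp_beta.
  rw (ltau_nat_l T _ _). rw (Mmap_compE T (app Y (M T Z)) _). rewrite kapp_beta.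
  unfold kapp, dstr. rewrite !Mmap_comp. reassoc.
  rw (mu_assoc T _). rwb (mu_nat T _). reflexivity.
Qed.

Lemma app_kapp_kcomp_dstr (X Y Z : C) :
  app X (M T Z) \o tensH (curry (kapp X Z)
    \o (Mmap T (kcomp T X Y Z) \o dstr T (Y ==> M T Z) (X ==> M T Y))) (cid X)
  = mu T Z \o (Mmap T (app Y (M T Z)) \o (dstr T (Y ==> M T Z) Y
    \o (tensH (cid (M T (Y ==> M T Z))) (kapp X Y)
    \o assoc (M T (Y ==> M T Z)) (M T (X ==> M T Y)) X))).
Proof.
  rewrite !tensH_comp_l. reassoc. rw (kapp_beta X Z). unfold kapp. reassoc.
  rw (tau_nat_l T _ _). rw (Mmap_compE T _ _). rewrite kcomp_beta.
  rw (dstr_tau_assoc T _ _ _). unfold kcomp_uncurried. rewrite !Mmap_comp. reassoc.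
  rwM (assoc_iso2 _ _ _). rwb (dstr_nat_r T _ _).
  rw (mu_assoc T _). rwb (mu_nat T _). rw (dstr_mu_r T _ _).
  rewrite !tensH_comp_r. reassoc. reflexivity.
Qed.

Lemma kapp_kcomp (X Y Z : C) :
  curry (kapp X Z) \o (Mmap T (kcomp T X Y Z)
    \o (mu T ((Y ==> M T Z) (x) (X ==> M T Y))
    \o (Mmap T (ltau T (Y ==> M T Z) (X ==> M T Y))
    \o tau T (Y ==> M T Z) (M T (X ==> M T Y)))))
  = kcomp T X Y Z \o tensH (curry (kapp Y Z)) (curry (kapp X Y)).
Proof.
  rewrite dstr_tau_ltau. apply curry_inj.
  rewrite app_kapp_kcomp_dstr, tensH_comp_l. rw (kcomp_beta X Y Z).
  symmetry. apply kcomp_uncurried_curry_kapp.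
Qed.

End KleisliMonoid.

Theorem theorem21 (C : SMCC) (T : CommMonad C) (A : C) :
  is_sym_EM_monoid T (curry (qmap T A)) (kcomp T A A A) (kident T A).
Proof.
  split; [split | split; [split; [| split] |]].
  - apply kapp_eta.
  - apply kapp_mu.
  - apply kcomp_assoc.
  - apply kident_kcomp.
  - apply kcomp_kident.
  - apply kapp_kcomp.
Qed.
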